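(* Let $(X_\lambda,x_\lambda)_{\lambda\in\Lambda}$ be a family of based, wep-connected spaces such that each $X_\lambda$ is locally path connected at $x_\lambda$ and $\{x_\lambda\}$ is closed in $X_\lambda$. Then the wedge $\bigvee_\lambda X_\lambda$ is wep-connected.
   Context: The wedge $\bigvee_\lambda X_\lambda$ is the quotient of the disjoint union $\bigsqcup_\lambda X_\lambda$ identifying all basepoints $x_\lambda$ to one point. For a space $Y$, $P(Y)$ is the space of paths $I=[0,1]\to Y$ with the compact-open topology. A path $p:I\to Y$ is well-ended (in $Y$) if for every open neighborhood $\mathcal U$ of $p$ in $P(Y)$ there are open neighborhoods $V_0,V_1$ of $p(0),p(1)$ in $Y$ such that for all $a\in V_0,b\in V_1$ there is $q\in\mathcal U$ with $q(0)=a$, $q(1)=b$. A space $Y$ is wep-connected if any two points of $Y$ are joined by a well-ended path in $Y$. *)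

From Stdlib Require Import Reals List.
Open Scope R_scope.

Definition is_topology {X : Type} (op : (X -> Prop) -> Prop) : Prop :=
  op (fun _ => True) /\
  (forall U V, op U -> op V -> op (fun x => U x /\ V x)) /\
  (forall F : (X -> Prop) -> Prop, (forall U, F U -> op U) ->
      op (fun x => exists U, F U /\ U x)).

Definition continuous {A B : Type} (opA : (A -> Prop) -> Prop)
  (opB : (B -> Prop) -> Prop) (f : A -> B) : Prop :=
  forall U, opB U -> opA (fun a => U (f a)).

Definition compact {A : Type} (opA : (A -> Prop) -> Prop) (K : A -> Prop) : Prop :=
  forall F : (A -> Prop) -> Prop, (forall U, F U -> opA U) ->
    (forall a, K a -> exists U, F U /\ U a) ->
    exists l : list (A -> Prop), (forall U, In U l -> F U) /\
      (forall a, K a -> exists U, In U l /\ U a).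

Definition R_open (U : R -> Prop) : Prop :=
  forall x, U x -> exists e, 0 < e /\ forall y, Rabs (y - x) < e -> U y.

Definition I := {t : R | 0 <= t <= 1}.

Definition I_open (V : I -> Prop) : Prop :=
  exists U, R_open U /\ forall t : I, V t <-> U (proj1_sig t).

Lemma I0_prf : 0 <= 0 <= 1. Proof. split; [apply Rle_refl | apply Rle_0_1]. Qed.
Lemma I1_prf : 0 <= 1 <= 1. Proof. split; [apply Rle_0_1 | apply Rle_refl]. Qed.
Definition I0 : I := exist _ 0 I0_prf.
Definition I1 : I := exist _ 1 I1_prf.

Definition Path {Y : Type} (opY : (Y -> Prop) -> Prop) : Type :=
  {p : I -> Y | continuous I_open opY p}.

Definition pth {Y : Type} {opY : (Y -> Prop) -> Prop} (p : Path opY) : I -> Y :=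
  proj1_sig p.

Definition co_subbasic {Y : Type} (opY : (Y -> Prop) -> Prop)
  (S : Path opY -> Prop) : Prop :=
  exists (K : I -> Prop) (U : Y -> Prop), compact I_open K /\ opY U /\
    forall p, S p <-> (forall t, K t -> U (pth p t)).

(* Compact-open topology: generated by the subbasis above
   (open = union of finite intersections of subbasic sets). *)
Definition CO_open {Y : Type} (opY : (Y -> Prop) -> Prop)
  (W : Path opY -> Prop) : Prop :=
  forall p, W p -> exists l : list (Path opY -> Prop),
    (forall S, In S l -> co_subbasic opY S) /\
    (forall S, In S l -> S p) /\
    (forall q, (forall S, In S l -> S q) -> W q).

Definition well_ended {Y : Type} (opY : (Y -> Prop) -> Prop) (p : Path opY) : Prop :=
  forall Ucal : Path opY -> Prop, CO_open opY Ucal -> Ucal p ->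
    exists V0 V1 : Y -> Prop, opY V0 /\ opY V1 /\ V0 (pth p I0) /\ V1 (pth p I1) /\
      forall a b, V0 a -> V1 b ->
        exists q : Path opY, Ucal q /\ pth q I0 = a /\ pth q I1 = b.

Definition wep_connected {Y : Type} (opY : (Y -> Prop) -> Prop) : Prop :=
  forall y z : Y, exists p : Path opY,
    well_ended opY p /\ pth p I0 = y /\ pth p I1 = z.

Definition lpc_at {Y : Type} (opY : (Y -> Prop) -> Prop) (x : Y) : Prop :=
  forall U, opY U -> U x ->
    exists V, opY V /\ V x /\ (forall y, V y -> U y) /\
      forall a b, V a -> V b ->
        exists p : Path opY, pth p I0 = a /\ pth p I1 = b /\ forall t, V (pth p t).

(* Wedge: quotient of the disjoint union identifying all basepoints. *)
Section Wedge.
Context {L : Type} {X : L -> Type} (op : forall l, (X l -> Prop) -> Prop)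
  (x0 : forall l, X l).

Definition dsum := {l : L & X l}.

Definition dsum_open (U : dsum -> Prop) : Prop :=
  forall l, op l (fun x => U (existT X l x)).

Definition wedge_rel (a b : dsum) : Prop :=
  a = b \/ (projT2 a = x0 (projT1 a) /\ projT2 b = x0 (projT1 b)).

Definition wedge : Type := {P : dsum -> Prop | exists a, P = wedge_rel a}.

Definition wedge_q (a : dsum) : wedge :=
  exist _ (wedge_rel a) (ex_intro _ a eq_refl).

Definition wedge_open (V : wedge -> Prop) : Prop :=
  dsum_open (fun a => V (wedge_q a)).
End Wedge.

From Pilot Require Import Defs.
From Stdlib Require Import Reals Lra List.
From Stdlib Require Import Classical FunctionalExtensionality PropExtensionality ProofIrrelevance Eqdep.
Open Scope R_scope.

(* Every point of the wedge is joined to the base point by a path that is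
   well-ended at its outer end: the image of a well-ended path of its summand
   (removing the closed base point keeps the outer neighbourhood open in the
   wedge), or, for the base point itself, the constant path, which is
   well-ended because the wedge is locally path connected there.  Concatenating
   two such paths gives a well-ended path, since a compact-open neighbourhood
   of a concatenation splits into neighbourhoods of its two halves. *)

Lemma open_ext {X : Type} (op : (X -> Prop) -> Prop) (U V : X -> Prop) :
  op U -> (forall x, U x <-> V x) -> op V.
Proof.
  intros HU E. replace V with U; [exact HU|].
  apply functional_extensionality; intro x; apply propositional_extensionality, E.
Qed.

Lemma open_empty {X : Type} (op : (X -> Prop) -> Prop) : is_topology op -> op (fun _ => False).
Proof.
  intros [_ [_ Hunion]].
  apply open_ext with (fun x => exists U, (fun _ : X -> Prop => False) U /\ U x).
  - apply Hunion; intros U [].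
  - intro x; split; [intros [U [[] _]] | intros []].
Qed.

Lemma open_list_inter {X A : Type} (op : (X -> Prop) -> Prop) (P : A -> X -> Prop) (l : list A) :
  is_topology op -> (forall a, In a l -> op (P a)) -> op (fun x => forall a, In a l -> P a x).
Proof.
  intros [Htrue [Hinter _]]. induction l as [|a l IH]; intro Hl.
  - apply open_ext with (fun _ => True); [exact Htrue|]. intro; split; [intros _ ? []|auto].
  - apply open_ext with (fun x => P a x /\ forall a', In a' l -> P a' x).
    + apply Hinter; [apply Hl; left; reflexivity | apply IH; intros; apply Hl; right; assumption].
    + intro x; split.
      * intros [Ha Hl'] a' [<- | Ha']; auto.
      * intro H; split; [apply H; left; reflexivity | intros; apply H; right; assumption].
Qed.

Lemma continuous_comp {A B C : Type} (opA : (A -> Prop) -> Prop) (opB : (B -> Prop) -> Prop)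
  (opC : (C -> Prop) -> Prop) (f : A -> B) (g : B -> C) :
  continuous opA opB f -> continuous opB opC g -> continuous opA opC (fun a => g (f a)).
Proof. intros Hf Hg U HU. exact (Hf _ (Hg _ HU)). Qed.

Lemma forall_in_cons {A : Type} (P : A -> Prop) (a : A) (l : list A) :
  P a -> (forall x, In x l -> P x) -> forall x, In x (a :: l) -> P x.
Proof. intros Ha Hl x [<- | Hx]; auto. Qed.

Lemma list_lift {A B : Type} (R : A -> B -> Prop) (l : list A) :
  (forall a, In a l -> exists b, R a b) ->
  exists l' : list B, (forall b, In b l' -> exists a, In a l /\ R a b) /\
    (forall a, In a l -> exists b, In b l' /\ R a b).
Proof.
  induction l as [|a l IH]; intro Hl.
  - exists nil; split; intros ? [].
  - destruct IH as [l' [H1 H2]]; [intros; apply Hl; right; assumption|].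
    destruct (Hl a (or_introl eq_refl)) as [b Hb].
    exists (b :: l'); split.
    + intros b' [E | Hb']; [subst b'; exists a; split; [left |]; auto|].
      destruct (H1 b' Hb') as [a' [? ?]]; exists a'; split; [right |]; auto.
    + intros a' [E | Ha']; [subst a'; exists b; split; [left |]; auto|].
      destruct (H2 a' Ha') as [b' [? ?]]; exists b'; split; [right |]; auto.
Qed.

Lemma list_partition {A : Type} (P Q : A -> Prop) (l : list A) :
  (forall a, In a l -> P a \/ Q a) ->
  exists l', (forall a, In a l' -> P a) /\ (forall a, In a l -> In a l' \/ Q a).
Proof.
  induction l as [|a l IH]; intro Hl.
  - exists nil; split; intros ? [].
  - destruct IH as [l' [H1 H2]]; [intros; apply Hl; right; assumption|].
    destruct (Hl a (or_introl eq_refl)) as [Ha | Ha].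
    + exists (a :: l'); split.
      * intros a' [<- | Ha']; auto.
      * intros a' [<- | Ha']; [left; left; reflexivity|].
        destruct (H2 a' Ha'); [left; right|right]; assumption.
    + exists l'; split; [exact H1|].
      intros a' [<- | Ha']; auto.
Qed.

Lemma compact_image {A B : Type} (opA : (A -> Prop) -> Prop) (opB : (B -> Prop) -> Prop)
  (f : A -> B) (K : A -> Prop) :
  Defs.compact opA K -> continuous opA opB f -> Defs.compact opB (fun b => exists a, K a /\ b = f a).
Proof.
  intros HK Hf F HF Hcov.
  set (preim := fun (U : B -> Prop) (V : A -> Prop) => F U /\ V = fun a => U (f a)).
  destruct (HK (fun V => exists U, preim U V)) as [l [Hl Hlcov]].
  - intros V [U [HU ->]]. apply Hf, HF, HU.
  - intros a Ha. destruct (Hcov (f a)) as [U [HU HUa]]; [exists a; auto|].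
    exists (fun a => U (f a)). split; [exists U; split; auto | exact HUa].
  - destruct (list_lift (fun V U => preim U V) l Hl) as [l' [Hl'F Hl'cov]].
    exists l'. split.
    + intros U HU. destruct (Hl'F U HU) as [V [_ [HFU _]]]. exact HFU.
    + intros b [a [Ha ->]]. destruct (Hlcov a Ha) as [V [HV HVa]].
      destruct (Hl'cov V HV) as [U [HU [_ ->]]]. exists U; auto.
Qed.

Lemma compact_inter_closed {A : Type} (opA : (A -> Prop) -> Prop) (K C : A -> Prop) :
  Defs.compact opA K -> opA (fun a => ~ C a) -> Defs.compact opA (fun a => K a /\ C a).
Proof.
  intros HK HC F HF Hcov.
  destruct (HK (fun U => F U \/ U = fun a => ~ C a)) as [l [Hl Hlcov]].
  - intros U [HU | ->]; auto.
  - intros a Ha. destruct (classic (C a)) as [Hc | Hc].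
    + destruct (Hcov a) as [U [HU HUa]]; [split; assumption|]. exists U; auto.
    + exists (fun a => ~ C a); auto.
  - destruct (list_partition F (fun U => U = fun a => ~ C a) l Hl) as [l' [Hl'F Hl'cov]].
    exists l'. split; [exact Hl'F|].
    intros a [Ha Hc]. destruct (Hlcov a Ha) as [U [HU HUa]].
    destruct (Hl'cov U HU) as [HU' | ->]; [exists U; auto | contradiction].
Qed.

Lemma I_eq (a b : I) : proj1_sig a = proj1_sig b -> a = b.
Proof.
  destruct a as [a Ha], b as [b Hb]; simpl; intros ->.
  f_equal; apply proof_irrelevance.
Qed.

Definition clamp (x : R) : R := Rmax 0 (Rmin x 1).

Lemma clamp_in_I (x : R) : 0 <= clamp x <= 1.
Proof. unfold clamp, Rmax, Rmin; repeat destruct Rle_dec; lra. Qed.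

Lemma clamp_id (x : R) : 0 <= x <= 1 -> clamp x = x.
Proof. unfold clamp, Rmax, Rmin; repeat destruct Rle_dec; lra. Qed.

Lemma clamp_lipschitz (a b : R) : Rabs (clamp a - clamp b) <= Rabs (a - b).
Proof.
  unfold clamp, Rmax, Rmin; repeat destruct Rle_dec; unfold Rabs;
  repeat destruct Rcase_abs; lra.
Qed.

Definition to_I (x : R) : I := exist _ (clamp x) (clamp_in_I x).

Lemma to_I_eq (t : I) (x : R) : proj1_sig t = x -> to_I x = t.
Proof. intros <-. apply I_eq; simpl. apply clamp_id, proj2_sig. Qed.

Lemma continuous_to_I_lipschitz (g : R -> R) (k : R) :
  0 < k -> (forall x y, Rabs (g x - g y) <= k * Rabs (x - y)) ->
  continuous I_open I_open (fun t : I => to_I (g (proj1_sig t))).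
Proof.
  intros Hk Hg V [U [HU HV]].
  exists (fun x => U (clamp (g x))). split.
  - intros x Hx. destruct (HU _ Hx) as [e [He He']].
    exists (e / k). split; [apply Rdiv_lt_0_compat; assumption|].
    intros y Hy. apply He'.
    apply Rle_lt_trans with (Rabs (g y - g x)); [apply clamp_lipschitz|].
    apply Rle_lt_trans with (k * Rabs (y - x)); [apply Hg|].
    apply Rmult_lt_reg_l with (/ k); [apply Rinv_0_lt_compat; assumption|].
    rewrite <- Rmult_assoc, Rinv_l, Rmult_1_l by lra.
    rewrite Rmult_comm. exact Hy.
  - intro t. rewrite HV. reflexivity.
Qed.

Definition stretch_lo (t : I) : I := to_I (2 * proj1_sig t).
Definition stretch_hi (t : I) : I := to_I (2 * proj1_sig t - 1).

Lemma continuous_stretch_lo : continuous I_open I_open stretch_lo.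
Proof.
  apply (continuous_to_I_lipschitz (fun x => 2 * x) 2); [lra|].
  intros x y. replace (2 * x - 2 * y) with (2 * (x - y)) by ring.
  rewrite Rabs_mult, Rabs_right by lra. lra.
Qed.

Lemma continuous_stretch_hi : continuous I_open I_open stretch_hi.
Proof.
  apply (continuous_to_I_lipschitz (fun x => 2 * x - 1) 2); [lra|].
  intros x y. replace (2 * x - 1 - (2 * y - 1)) with (2 * (x - y)) by ring.
  rewrite Rabs_mult, Rabs_right by lra. lra.
Qed.

Lemma stretch_lo_0 : stretch_lo I0 = I0.
Proof. apply to_I_eq; simpl; ring. Qed.

Lemma stretch_hi_1 : stretch_hi I1 = I1.
Proof. apply to_I_eq; simpl; ring. Qed.

Lemma stretch_lo_half (t : I) : proj1_sig t = 1/2 -> stretch_lo t = I1.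
Proof. intro Ht. apply to_I_eq; simpl; rewrite Ht; field. Qed.

Lemma stretch_hi_half (t : I) : proj1_sig t = 1/2 -> stretch_hi t = I0.
Proof. intro Ht. apply to_I_eq; simpl; rewrite Ht; field. Qed.

Lemma R_open_lt (c : R) : R_open (fun x => x < c).
Proof.
  intros x Hx. exists (c - x). split; [lra|].
  intros y Hy. unfold Rabs in Hy; destruct Rcase_abs; lra.
Qed.

Lemma R_open_gt (c : R) : R_open (fun x => c < x).
Proof.
  intros x Hx. exists (x - c). split; [lra|].
  intros y Hy. unfold Rabs in Hy; destruct Rcase_abs; lra.
Qed.

Lemma R_open_and (A B : R -> Prop) : R_open A -> R_open B -> R_open (fun x => A x /\ B x).
Proof.
  intros HA HB x [Ha Hb].
  destruct (HA x Ha) as [e1 [He1 HA']], (HB x Hb) as [e2 [He2 HB']].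
  exists (Rmin e1 e2). split; [apply Rmin_glb_lt; assumption|].
  intros y Hy. split; [apply HA' | apply HB'];
    eapply Rlt_le_trans; eauto; [apply Rmin_l | apply Rmin_r].
Qed.

Lemma R_open_or3 (A B C : R -> Prop) : R_open A -> R_open B -> R_open C ->
  R_open (fun x => A x \/ B x \/ C x).
Proof.
  intros HA HB HC x [Ha | [Hb | Hc]];
    [destruct (HA x Ha) as [e [He He']] | destruct (HB x Hb) as [e [He He']]
    | destruct (HC x Hc) as [e [He He']]];
    exists e; split; auto.
Qed.

Section Paths.
Context {Y : Type} (opY : (Y -> Prop) -> Prop).

Definition concat_fun (r s : I -> Y) (t : I) : Y :=
  if Rle_dec (proj1_sig t) (1/2) then r (stretch_lo t) else s (stretch_hi t).

Lemma continuous_concat_fun (r s : I -> Y) :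
  continuous I_open opY r -> continuous I_open opY s -> r I1 = s I0 ->
  continuous I_open opY (concat_fun r s).
Proof.
  intros Hr Hs E U HU.
  destruct (continuous_comp _ _ _ _ _ continuous_stretch_lo Hr U HU) as [A [HA HAe]].
  destruct (continuous_comp _ _ _ _ _ continuous_stretch_hi Hs U HU) as [B [HB HBe]].
  simpl in HAe, HBe.
  (* at t = 1/2 both halves land on the common point, so [A] and [B] agree there *)
  exists (fun x => (x < 1/2 /\ A x) \/ (1/2 < x /\ B x) \/ (A x /\ B x)). split.
  - apply R_open_or3; apply R_open_and; auto using R_open_lt, R_open_gt.
  - intro t. unfold concat_fun.
    destruct (Rle_dec (proj1_sig t) (1/2)) as [Hle | Hgt].
    + rewrite HAe. destruct (Rlt_le_dec (proj1_sig t) (1/2)) as [Hlt | Hge].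
      * split; [intro; left; auto|]. intros [[_ ?] | [[? _] | [? _]]]; auto; lra.
      * assert (Ht : proj1_sig t = 1/2) by lra.
        assert (A (proj1_sig t) <-> B (proj1_sig t)).
        { rewrite <- HAe, <- HBe, stretch_lo_half, stretch_hi_half, E by exact Ht. tauto. }
        split; [intro; right; right; tauto|].
        intros [[? _] | [[? _] | [? _]]]; auto; lra.
    + rewrite HBe. split; [intro; right; left; split; auto; lra|].
      intros [[? _] | [[_ ?] | [_ ?]]]; auto; lra.
Qed.

Definition path_concat (r s : Path opY) (H : pth r I1 = pth s I0) : Path opY :=
  exist _ (concat_fun (pth r) (pth s))
    (continuous_concat_fun _ _ (proj2_sig r) (proj2_sig s) H).

Section Concat.
Variables (r s : Path opY) (H : pth r I1 = pth s I0).

Lemma path_concat_lo (t : I) :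
  proj1_sig t <= 1/2 -> pth (path_concat r s H) t = pth r (stretch_lo t).
Proof. intro Ht. unfold path_concat, pth at 1, concat_fun; simpl. destruct Rle_dec; [reflexivity | lra]. Qed.

Lemma path_concat_hi (t : I) :
  1/2 <= proj1_sig t -> pth (path_concat r s H) t = pth s (stretch_hi t).
Proof.
  intro Ht. unfold path_concat, pth at 1, concat_fun; simpl.
  destruct Rle_dec as [Hle |]; [|reflexivity].
  assert (Hhalf : proj1_sig t = 1/2) by lra.
  rewrite stretch_lo_half, stretch_hi_half by exact Hhalf. exact H.
Qed.

Lemma path_concat_I0 : pth (path_concat r s H) I0 = pth r I0.
Proof. rewrite path_concat_lo, stretch_lo_0; [reflexivity | simpl; lra]. Qed.

Lemma path_concat_I1 : pth (path_concat r s H) I1 = pth s I1.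
Proof. rewrite path_concat_hi, stretch_hi_1; [reflexivity | simpl; lra]. Qed.

Lemma path_concat_within (P : Y -> Prop) :
  (forall t, P (pth r t)) -> (forall t, P (pth s t)) -> forall t, P (pth (path_concat r s H) t).
Proof.
  intros Hr Hs t. destruct (Rle_dec (proj1_sig t) (1/2)).
  - rewrite path_concat_lo by assumption. apply Hr.
  - rewrite path_concat_hi by lra. apply Hs.
Qed.

End Concat.

Lemma compact_stretch_image (K : I -> Prop) (C : I -> Prop) (f : I -> I) :
  Defs.compact I_open K -> I_open (fun t => ~ C t) -> continuous I_open I_open f ->
  Defs.compact I_open (fun u => exists t, (K t /\ C t) /\ u = f t).
Proof. intros HK HC Hf. apply (compact_image I_open); [apply compact_inter_closed |]; assumption. Qed.

Lemma co_subbasic_concat_split (r s : Path opY) (H : pth r I1 = pth s I0) (S : Path opY -> Prop) :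
  co_subbasic opY S -> S (path_concat r s H) ->
  exists Sr Ss, co_subbasic opY Sr /\ Sr r /\ co_subbasic opY Ss /\ Ss s /\
    forall r' s' (H' : pth r' I1 = pth s' I0), Sr r' -> Ss s' -> S (path_concat r' s' H').
Proof.
  intros [K [U [HK [HU HS]]]] Hrs. rewrite HS in Hrs.
  exists (fun p => forall t, K t -> proj1_sig t <= 1/2 -> U (pth p (stretch_lo t))),
         (fun p => forall t, K t -> 1/2 <= proj1_sig t -> U (pth p (stretch_hi t))).
  repeat split.
  - exists (fun u => exists t, (K t /\ proj1_sig t <= 1/2) /\ u = stretch_lo t), U.
    split; [|split; [exact HU|]].
    + apply compact_stretch_image; [exact HK | | exact continuous_stretch_lo].
      exists (fun x => 1/2 < x). split; [apply R_open_gt | intro t; split; intro; lra].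
    + intro p. split.
      * intros Hp u [t [[Ht Hle] ->]]. apply Hp; assumption.
      * intros Hp t Ht Hle. apply Hp. exists t; auto.
  - intros t Ht Hle. rewrite <- path_concat_lo with (s := s) (H := H) by exact Hle. auto.
  - exists (fun u => exists t, (K t /\ 1/2 <= proj1_sig t) /\ u = stretch_hi t), U.
    split; [|split; [exact HU|]].
    + apply compact_stretch_image; [exact HK | | exact continuous_stretch_hi].
      exists (fun x => x < 1/2). split; [apply R_open_lt | intro t; split; intro; lra].
    + intro p. split.
      * intros Hp u [t [[Ht Hle] ->]]. apply Hp; assumption.
      * intros Hp t Ht Hle. apply Hp. exists t; auto.
  - intros t Ht Hge. rewrite <- path_concat_hi with (r := r) (H := H) by exact Hge. auto.
  - intros r' s' H' Hr Hs. rewrite HS. intros t Ht.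
    destruct (Rle_dec (proj1_sig t) (1/2)).
    + rewrite path_concat_lo by assumption. auto.
    + rewrite path_concat_hi by lra. apply Hs; auto; lra.
Qed.

Lemma co_basis_concat_split (r s : Path opY) (H : pth r I1 = pth s I0)
  (l : list (Path opY -> Prop)) :
  (forall S, In S l -> co_subbasic opY S) -> (forall S, In S l -> S (path_concat r s H)) ->
  exists lr ls, (forall S, In S lr -> co_subbasic opY S) /\ (forall S, In S lr -> S r) /\
    (forall S, In S ls -> co_subbasic opY S) /\ (forall S, In S ls -> S s) /\
    forall r' s' (H' : pth r' I1 = pth s' I0),
      (forall S, In S lr -> S r') -> (forall S, In S ls -> S s') ->
      forall S, In S l -> S (path_concat r' s' H').
Proof.
  induction l as [|S l IH]; intros Hsub Hin.
  - exists nil, nil. repeat split; intros ? []; intros; contradiction.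
  - destruct IH as [lr [ls [Hlr [Hlrr [Hls [Hlss Hglue]]]]]];
      [intros; apply Hsub; right; assumption | intros; apply Hin; right; assumption |].
    destruct (co_subbasic_concat_split r s H S) as [Sr [Ss [HSr [HSrr [HSs [HSss HS]]]]]];
      [apply Hsub; left; reflexivity | apply Hin; left; reflexivity |].
    exists (Sr :: lr), (Ss :: ls).
    repeat split; try (apply forall_in_cons; assumption).
    intros r' s' H' Hr Hs S' [E | HS']; [subst S' |].
    + apply HS; [apply Hr | apply Hs]; left; reflexivity.
    + apply Hglue; auto; intros; [apply Hr | apply Hs]; right; assumption.
Qed.

Definition path_end (b : bool) : I := if b then I1 else I0.

Lemma path_orient (P : Path opY -> Prop) (b : bool) (a c : Y) :
  (exists p, pth p I0 = a /\ pth p I1 = c /\ P p) ->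
  (exists p, pth p I0 = c /\ pth p I1 = a /\ P p) ->
  exists p, pth p (path_end b) = a /\ pth p (path_end (negb b)) = c /\ P p.
Proof. destruct b; simpl; intros [p Hp] [q Hq]; [exists q | exists p]; tauto. Qed.

(* One half of well-endedness: end [b] of [p] may be moved within a
   neighbourhood while the other end stays fixed. *)
Definition well_ended_at (b : bool) (p : Path opY) : Prop :=
  forall Ucal : Path opY -> Prop, CO_open opY Ucal -> Ucal p ->
    exists V : Y -> Prop, opY V /\ V (pth p (path_end b)) /\
      forall a, V a -> exists q : Path opY, Ucal q /\
        pth q (path_end b) = a /\ pth q (path_end (negb b)) = pth p (path_end (negb b)).

Lemma well_ended_at_of_well_ended (b : bool) (p : Path opY) :
  well_ended opY p -> well_ended_at b p.
Proof.
  intros Hp Ucal HUo HUp.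
  destruct (Hp Ucal HUo HUp) as [V0 [V1 [HV0 [HV1 [Hp0 [Hp1 Hq]]]]]].
  destruct b; [exists V1 | exists V0]; simpl; repeat split; try assumption; intros a Ha.
  - destruct (Hq (pth p I0) a Hp0 Ha) as [q [? [? ?]]]. exists q; auto.
  - destruct (Hq a (pth p I1) Ha Hp1) as [q [? [? ?]]]. exists q; auto.
Qed.

Lemma basic_CO_open (l : list (Path opY -> Prop)) :
  (forall S, In S l -> co_subbasic opY S) -> CO_open opY (fun p => forall S, In S l -> S p).
Proof. intros Hl p Hp. exists l. auto. Qed.

Lemma path_concat_well_ended (r s : Path opY) (H : pth r I1 = pth s I0) :
  well_ended_at false r -> well_ended_at true s -> well_ended opY (path_concat r s H).
Proof.
  intros Hr Hs Ucal HUo HUp.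
  destruct (HUo _ HUp) as [l [Hl [Hlp HlU]]].
  destruct (co_basis_concat_split r s H l Hl Hlp) as [lr [ls [Hlr [Hlrr [Hls [Hlss Hglue]]]]]].
  destruct (Hr _ (basic_CO_open lr Hlr) Hlrr) as [V0 [HV0 [HV0r Hr']]].
  destruct (Hs _ (basic_CO_open ls Hls) Hlss) as [V1 [HV1 [HV1s Hs']]].
  cbn [path_end negb] in *. exists V0, V1. rewrite path_concat_I0, path_concat_I1.
  repeat split; try assumption. intros a b Ha Hb.
  destruct (Hr' a Ha) as [r' [Hr'l [Hr'0 Hr'1]]].
  destruct (Hs' b Hb) as [s' [Hs'l [Hs'1 Hs'0]]].
  assert (H' : pth r' I1 = pth s' I0) by congruence.
  exists (path_concat r' s' H'). rewrite path_concat_I0, path_concat_I1.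
  split; [apply HlU, Hglue |]; auto.
Qed.

Lemma continuous_const (y : Y) : continuous I_open opY (fun _ : I => y).
Proof.
  intros U HU. exists (fun _ => U y). split.
  - intros x Hx. exists 1. split; [lra | auto].
  - intro t; tauto.
Qed.

Definition const_path (y : Y) : Path opY := exist _ (fun _ : I => y) (continuous_const y).

Lemma co_subbasic_const_open (S : Path opY -> Prop) :
  is_topology opY -> co_subbasic opY S -> opY (fun y => S (const_path y)).
Proof.
  intros Htop [K [U [_ [HU HS]]]].
  destruct (classic (exists t, K t)) as [[t0 Ht0] | Hempty].
  - apply open_ext with U; [exact HU|]. intro y. rewrite HS.
    split; [intros; assumption | intro Hy; apply (Hy t0 Ht0)].
  - apply open_ext with (fun _ => True); [apply Htop|]. intro y. rewrite HS.
    split; [intros _ t Ht; exfalso; apply Hempty; exists t; assumption | auto].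
Qed.

(* A path inside the open set of points whose constant path lies in the basic
   neighbourhood lies in that neighbourhood itself. *)
Lemma const_path_well_ended_at (b : bool) (y : Y) :
  is_topology opY -> lpc_at opY y -> well_ended_at b (const_path y).
Proof.
  intros Htop Hlpc Ucal HUo HUy.
  destruct (HUo _ HUy) as [l [Hl [Hly HlU]]].
  set (W := fun w => forall S, In S l -> S (const_path w)).
  assert (HW : opY W)
    by (apply open_list_inter; [exact Htop | intros; apply co_subbasic_const_open; auto]).
  destruct (Hlpc W HW Hly) as [V [HV [HVy [HVW Hpaths]]]].
  exists V. split; [exact HV|]. split; [exact HVy|]. intros a Ha.
  destruct (path_orient (fun p => forall t, V (pth p t)) b a y) as [p [Hpa [Hpy Hpt]]];
    [apply Hpaths | apply Hpaths |]; try assumption.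
  exists p. split; [|split; assumption].
  apply HlU. intros S HS. destruct (Hl S HS) as [K [U [_ [_ HSe]]]].
  rewrite HSe. intros t Ht.
  specialize (HVW _ (Hpt t) S HS). rewrite HSe in HVW. exact (HVW t Ht).
Qed.

End Paths.

(* [lpc_at opY y] unfolds to: every open [U] containing [y] has some [N] with [pc_nbhd opY U y N]. *)
Definition pc_nbhd {Y : Type} (opY : (Y -> Prop) -> Prop) (U : Y -> Prop) (y : Y)
  (N : Y -> Prop) : Prop :=
  opY N /\ N y /\ (forall z, N z -> U z) /\
  forall a c, N a -> N c ->
    exists p : Path opY, pth p I0 = a /\ pth p I1 = c /\ forall t, N (pth p t).

Section Wedge.
Context {L : Type} {X : L -> Type} (op : forall l, (X l -> Prop) -> Prop) (x0 : forall l, X l).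
Hypothesis Htop : forall l, is_topology (op l).

Local Notation opW := (wedge_open op x0).

Definition wedge_pt (l : L) (x : X l) : wedge x0 := wedge_q x0 (existT X l x).

Lemma wedge_eq (w1 w2 : wedge x0) : proj1_sig w1 = proj1_sig w2 -> w1 = w2.
Proof.
  destruct w1 as [P1 H1], w2 as [P2 H2]; simpl; intros <-.
  f_equal; apply proof_irrelevance.
Qed.

Lemma wedge_pt_surj (w : wedge x0) : exists l x, w = wedge_pt l x.
Proof. destruct w as [P [[l x] HP]]. exists l, x. apply wedge_eq. exact HP. Qed.

Lemma wedge_pt_base (l m : L) : wedge_pt l (x0 l) = wedge_pt m (x0 m).
Proof.
  apply wedge_eq; simpl. apply functional_extensionality; intro c.
  apply propositional_extensionality. unfold wedge_rel; simpl.
  split; intros [<- | [_ Hc]]; right; auto.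
Qed.

Lemma wedge_pt_inj (l m : L) (x : X l) (y : X m) :
  wedge_pt l x = wedge_pt m y -> x <> x0 l -> existT X l x = existT X m y.
Proof.
  intros E Hx. apply (f_equal (@proj1_sig _ _)) in E. simpl in E.
  assert (Hrel : wedge_rel x0 (existT X l x) (existT X m y)) by (rewrite E; left; reflexivity).
  destruct Hrel as [? | [Hx' _]]; [assumption | contradiction].
Qed.

Lemma wedge_is_topology : is_topology opW.
Proof.
  split; [|split].
  - intro l. apply Htop.
  - intros U V HU HV l. apply Htop; [apply HU | apply HV].
  - intros F HF l.
    apply open_ext with (fun x => exists U',
      (fun U' => exists U, F U /\ U' = fun x => U (wedge_pt l x)) U' /\ U' x).
    + apply Htop. intros U' [U [HU ->]]. apply HF, HU.
    + intro x. split.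
      * intros [U' [[U [HU ->]] HUx]]. exists U. auto.
      * intros [U [HU HUx]]. exists (fun x => U (wedge_pt l x)). split; [exists U|]; auto.
Qed.

Lemma continuous_wedge_pt (l : L) : continuous (op l) opW (wedge_pt l).
Proof. intros V HV. exact (HV l). Qed.

Definition push_path (l : L) (p : Path (op l)) : Path opW :=
  exist _ (fun t => wedge_pt l (pth p t))
    (continuous_comp _ _ _ _ _ (proj2_sig p) (continuous_wedge_pt l)).

Lemma push_path_at (l : L) (p : Path (op l)) (t : I) :
  pth (push_path l p) t = wedge_pt l (pth p t).
Proof. reflexivity. Qed.

Lemma wedge_open_image (l : L) (A : X l -> Prop) :
  op l A -> (forall x, A x -> x <> x0 l) -> opW (fun w => exists x, A x /\ w = wedge_pt l x).
Proof.
  intros HA HAbase m. destruct (classic (m = l)) as [<- | Hml].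
  - apply open_ext with A; [exact HA|]. intro y. split; [intro; exists y; auto|].
    intros [x [Hx E]]. symmetry in E. apply wedge_pt_inj in E; [|auto].
    apply inj_pair2 in E. subst; assumption.
  - apply open_ext with (fun _ => False); [apply open_empty, Htop|].
    intro y. split; [intros []|]. intros [x [Hx E]].
    symmetry in E. apply wedge_pt_inj in E; [|auto].
    apply (f_equal (@projT1 _ _)) in E. simpl in E. congruence.
Qed.

Lemma CO_open_push_preimage (l : L) (Ucal : Path opW -> Prop) :
  CO_open opW Ucal -> CO_open (op l) (fun q => Ucal (push_path l q)).
Proof.
  intros HU q Hq. destruct (HU _ Hq) as [ls [Hls [Hlsq HlsU]]].
  exists (map (fun S q' => S (push_path l q')) ls). split; [|split].
  - intros S' HS'. apply in_map_iff in HS'. destruct HS' as [S [<- HS]].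
    destruct (Hls S HS) as [K [U [HK [HUo HSe]]]].
    exists K, (fun x => U (wedge_pt l x)). split; [exact HK|]. split; [exact (HUo l)|].
    intro p. rewrite HSe. reflexivity.
  - intros S' HS'. apply in_map_iff in HS'. destruct HS' as [S [<- HS]]. exact (Hlsq S HS).
  - intros q' Hq'. apply HlsU. intros S HS.
    apply (Hq' (fun q' => S (push_path l q'))). apply in_map_iff. exists S; auto.
Qed.

(* Removing the base point keeps the neighbourhood of the moving end open in the wedge. *)
Lemma push_path_well_ended_at (Hcl : forall l, op l (fun x => x <> x0 l))
  (l : L) (b : bool) (p : Path (op l)) :
  well_ended_at (op l) b p -> pth p (path_end b) <> x0 l -> well_ended_at opW b (push_path l p).
Proof.
  intros Hp Hend Ucal HUo HUp.
  destruct (Hp _ (CO_open_push_preimage l Ucal HUo) HUp) as [V [HV [HVp Hq]]].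
  exists (fun w => exists x, (V x /\ x <> x0 l) /\ w = wedge_pt l x). split; [|split].
  - apply wedge_open_image; [apply Htop; auto | intros x [_ H]; exact H].
  - exists (pth p (path_end b)). auto.
  - intros a [x [[Hx _] ->]]. destruct (Hq x Hx) as [q [Hql [Hqb Hqnb]]].
    exists (push_path l q). rewrite !push_path_at, Hqb, Hqnb. auto.
Qed.

Lemma wedge_open_pc_union (U : wedge x0 -> Prop) :
  (forall k, exists N, pc_nbhd (op k) (fun x => U (wedge_pt k x)) (x0 k) N) ->
  opW (fun w => exists k x N, pc_nbhd (op k) (fun x => U (wedge_pt k x)) (x0 k) N /\
                                N x /\ w = wedge_pt k x).
Proof.
  intros Hgood m.
  apply open_ext with (fun x => exists N, pc_nbhd (op m) (fun x => U (wedge_pt m x)) (x0 m) N /\ N x).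
  - apply (proj2 (proj2 (Htop m))). intros N [HN _]; exact HN.
  - intro y. split.
    + intros [N [HN Hy]]. exists m, y, N. auto.
    + intros [k [x [N [HN [Hx E]]]]]. destruct (classic (y = x0 m)) as [-> | Hy].
      * destruct (Hgood m) as [N' HN']. exists N'. split; [|apply HN']; exact HN'.
      * apply wedge_pt_inj in E; [|exact Hy].
        assert (k = m) by exact (eq_sym (f_equal (@projT1 _ _) E)). subst k.
        apply inj_pair2 in E. subst x. exists N; auto.
Qed.

(* The union over all summands of path-connected neighbourhoods of the base
   points; two of its points are joined through the base point. *)
Lemma wedge_lpc_at_base (Hlpc : forall l, lpc_at (op l) (x0 l)) (l : L) :
  lpc_at opW (wedge_pt l (x0 l)).
Proof.
  intros U HU HUbase.
  assert (Hgood : forall k, exists N, pc_nbhd (op k) (fun x => U (wedge_pt k x)) (x0 k) N).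
  { intro k. apply (Hlpc k); [apply HU | rewrite (wedge_pt_base k l); exact HUbase]. }
  set (V := fun w => exists k x N, pc_nbhd (op k) (fun x => U (wedge_pt k x)) (x0 k) N /\
                                   N x /\ w = wedge_pt k x).
  exists V. split; [apply wedge_open_pc_union, Hgood|]. split; [|split].
  - destruct (Hgood l) as [N HN]. exists l, (x0 l), N. split; [exact HN | split; [apply HN | reflexivity]].
  - intros w [k [x [N [[_ [_ [HNU _]]] [Hx ->]]]]]. apply HNU, Hx.
  - intros a c [k [x [N [HN [Hx ->]]]]] [m [y [N' [HN' [Hy ->]]]]].
    destruct HN as [HNo [HNb [HNU HNpaths]]], HN' as [HN'o [HN'b [HN'U HN'paths]]].
    destruct (HNpaths x (x0 k) Hx HNb) as [p [Hp0 [Hp1 Hpt]]].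
    destruct (HN'paths (x0 m) y HN'b Hy) as [p' [Hp'0 [Hp'1 Hp't]]].
    assert (H : pth (push_path k p) I1 = pth (push_path m p') I0)
      by (rewrite !push_path_at, Hp1, Hp'0; apply wedge_pt_base).
    exists (path_concat _ _ _ H).
    rewrite path_concat_I0, path_concat_I1, !push_path_at, Hp0, Hp'1.
    split; [reflexivity | split; [reflexivity |]].
    apply (path_concat_within opW _ _ H V); intro t; rewrite push_path_at.
    + exists k, (pth p t), N. repeat split; auto.
    + exists m, (pth p' t), N'. repeat split; auto.
Qed.

Lemma wedge_path_to_base (Hwep : forall l, wep_connected (op l))
  (Hlpc : forall l, lpc_at (op l) (x0 l)) (Hcl : forall l, op l (fun x => x <> x0 l))
  (b : bool) (l : L) (x : X l) :
  exists P : Path opW, well_ended_at opW b P /\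
    pth P (path_end b) = wedge_pt l x /\ pth P (path_end (negb b)) = wedge_pt l (x0 l).
Proof.
  destruct (classic (x = x0 l)) as [-> | Hx].
  - exists (const_path opW (wedge_pt l (x0 l))).
    split; [|split; reflexivity].
    apply const_path_well_ended_at; [apply wedge_is_topology | apply wedge_lpc_at_base, Hlpc].
  - destruct (path_orient (op l) (well_ended (op l)) b x (x0 l)) as [p [Hpx [Hpbase Hp]]];
      [destruct (Hwep l x (x0 l)) as [p ?] | destruct (Hwep l (x0 l) x) as [p ?] |];
      [exists p; tauto .. |].
    exists (push_path l p). rewrite !push_path_at, Hpx, Hpbase.
    split; [|split; reflexivity].
    apply push_path_well_ended_at; [exact Hcl | apply well_ended_at_of_well_ended, Hp | congruence].
Qed.

End Wedge.

Theorem lemma4p21 (L : Type) (X : L -> Type)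
  (op : forall l, (X l -> Prop) -> Prop) (x0 : forall l, X l)
  (Htop : forall l, is_topology (op l))
  (Hwep : forall l, wep_connected (op l))
  (Hlpc : forall l, lpc_at (op l) (x0 l))
  (Hcl : forall l, op l (fun x => x <> x0 l)) :
  wep_connected (wedge_open op x0).
Proof.
  intros y z.
  destruct (wedge_pt_surj x0 y) as [l [x ->]], (wedge_pt_surj x0 z) as [m [x' ->]].
  destruct (wedge_path_to_base op x0 Htop Hwep Hlpc Hcl false l x) as [A [HA [HA0 HA1]]].
  destruct (wedge_path_to_base op x0 Htop Hwep Hlpc Hcl true m x') as [B [HB [HB1 HB0]]].
  simpl in *.
  assert (H : pth A I1 = pth B I0) by (rewrite HA1, HB0; apply wedge_pt_base).
  exists (path_concat _ A B H).
  rewrite path_concat_I0, path_concat_I1.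
  auto using path_concat_well_ended.
Qed.
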